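(* Let $(A_*,\partial,\ell)$ be an ascending chain complex over a field $\kappa$ with $H_k(A_* )=0$ for all $k$, and suppose each $(A_k,\ell|_{A_k})$ satisfies the best approximation property. Then there are index sets $\mathcal{I}_k$ and, for each $k$, an $\ell$-orthogonal basis $\{x^k_i: i\in\mathcal{I}_{k+1}\}\cup\{y^k_j:j\in\mathcal{I}_k\}$ of $A_k$ such that $\partial y^{k+1}_i=x^k_i$ for every $i\in\mathcal{I}_{k+1}$.
   Context: An ascending chain complex over $\kappa$ is a triple $(C_*,\partial,\ell)$ where $(C_*=\bigoplus_{k\in\mathbb{Z}}C_k,\partial)$ is a chain complex of $\kappa$-vector spaces and $\ell\colon C_*\to\mathbb{R}\cup\{-\infty\}$ satisfies: $\ell(x)=-\infty$ iff $x=0$; $\ell(\sum_i c_ix_i)\le\max\{\ell(x_i): c_i\neq 0\}$, with equality if the $x_i$ lie in pairwise distinct degrees; and $\ell(\partial x)\le\ell(x)$. A subset $S\subset V\setminus\{0\}$ is $\ell$-orthogonal if $\ell(\sum c_iv_i)=\max\{\ell(v_i):c_i\neq0\}$ for all finitely many distinct $v_i\in S$, $c_i\in\kappa$. A filtered vector space $(V,\ell)$ satisfies the best approximation property if for every proper subspace $W\subsetneq V$ and every $v\in V\setminus W$ there is $w_0\in W$ with $\ell(v-w_0)\le\ell(v-w)$ for all $w\in W$. *)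

From HB Require Import structures.
From mathcomp Require Import all_boot all_order all_algebra.
From mathcomp Require Import constructive_ereal reals.
From Stdlib Require List.
Set Implicit Arguments. Unset Strict Implicit. Unset Printing Implicit Defensive.
Import Order.TTheory GRing.Theory Num.Theory.
Local Open Scope ring_scope.
Local Open Scope ereal_scope.

Section Defs.
Variables (R : realType) (K : fieldType).

Definition emax_seq (T : Type) (s : seq T) (P : T -> bool) (f : T -> \bar R) : \bar R :=
  \big[Order.max/-oo]_(p <- s | P p) f p.

Definition filtration_fun (V : lmodType K) (l : V -> \bar R) : Prop :=
  (forall x : V, l x != +oo) /\
  (forall x : V, l x = -oo <-> x = 0%R) /\
  (forall s : seq (K * V),
      l (\sum_(p <- s) p.1 *: p.2)%R <= emax_seq s (fun p => p.1 != 0%R) (fun p => l p.2)).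

Definition ascending_chain_complex (A : int -> lmodType K)
    (d : forall k : int, {linear A (k + 1)%R -> A k})
    (l : forall k : int, A k -> \bar R) : Prop :=
  (forall k (x : A (k + 1 + 1)%R), d k (d (k + 1)%R x) = 0%R) /\
  (forall k, filtration_fun (l k)) /\
  (forall k (x : A (k + 1)%R), l k (d k x) <= l (k + 1)%R x).

Definition acyclic (A : int -> lmodType K)
    (d : forall k : int, {linear A (k + 1)%R -> A k}) : Prop :=
  forall k (x : A (k + 1)%R), d k x = 0%R ->
    exists y : A (k + 1 + 1)%R, d (k + 1)%R y = x.

Definition subspace (V : lmodType K) (W : V -> Prop) : Prop :=
  W 0%R /\ (forall u v, W u -> W v -> W (u + v)%R) /\
  (forall (c : K) v, W v -> W (c *: v)%R).

Definition best_approximation (V : lmodType K) (l : V -> \bar R) : Prop :=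
  forall W : V -> Prop, subspace W -> (exists v, ~ W v) ->
  forall v, ~ W v ->
  exists2 w0, W w0 & forall w, W w -> l (v - w0)%R <= l (v - w)%R.

Definition l_orthogonal (V : lmodType K) (l : V -> \bar R) (J : Type) (b : J -> V) : Prop :=
  (forall i j, b i = b j -> i = j) /\
  (forall i, b i != 0%R) /\
  (forall s : seq (J * K), List.NoDup (map fst s) ->
     l (\sum_(p <- s) p.2 *: b p.1)%R = emax_seq s (fun p => p.2 != 0%R) (fun p => l (b p.1))).

Definition is_basis (V : lmodType K) (J : Type) (b : J -> V) : Prop :=
  (forall i j, b i = b j -> i = j) /\
  (forall s : seq (J * K), List.NoDup (map fst s) ->
     (\sum_(p <- s) p.2 *: b p.1)%R = 0%R -> forall p, List.In p s -> p.2 = 0%R) /\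
  (forall v : V, exists s : seq (J * K), v = (\sum_(p <- s) p.2 *: b p.1)%R).

End Defs.

From HB Require Import structures.
From mathcomp Require Import all_boot all_order all_algebra.
From mathcomp Require Import constructive_ereal reals classical_sets boolp.
From Stdlib Require List.
Set Implicit Arguments. Unset Strict Implicit. Unset Printing Implicit Defensive.
Import Order.TTheory GRing.Theory Num.Theory.
Local Open Scope ring_scope.

(* The best approximation property makes the filtration of every [A k]
   well founded: a strictly decreasing sequence g_0, g_1, ... would leave g_0
   without a best approximation by the combinations of the g_n with zero
   coefficient sum. It also gives every boundary x of degree k a lift of least
   length, so the boundaries B_k carry two well-founded filtrations: l and the
   lift norm x |-> min { l y : d y = x }. By Zorn's lemma there is a maximal
   family in B_k that is free modulo elements strictly below in either
   filtration; induction on both filtrations shows it spans B_k, and it is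
   orthogonal for both. These are the x's; minimal lifts of those of degree
   k - 1 are the y's. Orthogonality for the lift norm makes every combination
   of y's a minimal lift, hence l-orthogonal to the cycles Z_k = B_k, and the
   x's are l-orthogonal among themselves. *)

Lemma sum_nat_delta (M : zmodType) n k (F : nat -> M) : (k < n)%N ->
  \sum_(i < n) (if (i : nat) == k then F i else 0) = F k.
Proof.
move=> kn; rewrite (bigD1 (Ordinal kn)) //= eqxx big1 ?addr0 // => i.
by rewrite -val_eqE /= => /negbTE ->.
Qed.

Lemma sum_widen (M : zmodType) n m (F : nat -> M) : (n <= m)%N ->
  \sum_(i < m) (if (i < n)%N then F i else 0) = \sum_(i < n) F i.
Proof. by move=> nm; rewrite (big_ord_widen _ F nm) [in RHS]big_mkcond. Qed.

Lemma NoDup_map_filter (T U : Type) (f : T -> U) (P : pred T) (s : seq T) :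
  List.NoDup (map f s) -> List.NoDup (map f (filter P s)).
Proof.
elim: s => [|a s IH] //= /List.NoDup_cons_iff [fa fs].
case: ifP => _ /=; last exact: IH.
apply: List.NoDup_cons (IH fs) => /List.in_map_iff [x [fx /List.filter_In [sx _]]].
by apply: fa; apply/List.in_map_iff; exists x.
Qed.

Lemma big1_In (T : Type) (M : zmodType) (s : seq T) (P : pred T) (F : T -> M) :
  (forall i, List.In i s -> P i -> F i = 0) -> \sum_(i <- s | P i) F i = 0.
Proof.
elim: s => [|i s IH] F0; first by rewrite big_nil.
rewrite big_cons IH => [|j sj]; last exact: F0 (or_intror sj).
by case: ifP => // Pi; rewrite F0 ?addr0 //; left.
Qed.

Lemma eq_big_In (T : Type) (M : zmodType) (s : seq T) (F G : T -> M) :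
  (forall i, List.In i s -> F i = G i) -> \sum_(i <- s) F i = \sum_(i <- s) G i.
Proof.
elim: s => [|i s IH] FG; first by rewrite !big_nil.
by rewrite !big_cons FG ?IH //; [move=> j sj; apply: FG; right | left].
Qed.

Lemma sum_snd_same_fst (T : eqType) (M : zmodType) (s : seq (T * M)) p :
  List.NoDup (map fst s) -> List.In p s -> \sum_(q <- s | q.1 == p.1) q.2 = p.2.
Proof.
elim: s => [|q s IH] //= /List.NoDup_cons_iff [qs nd] [<-|sp]; rewrite big_cons.
  rewrite eqxx big1_In ?addr0 // => r rs /eqP rq.
  by case: qs; rewrite -rq; apply/List.in_map_iff; exists r.
case: eqP => [qp|_]; last exact: IH.
by case: qs; rewrite qp; apply/List.in_map_iff; exists p.
Qed.

Lemma chain_bigcup_seq (T U : Type) (Fs : set (set T)) (f : U -> T) (s : seq U) :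
  total_on Fs subset -> (forall p, List.In p s -> (\bigcup_(X in Fs) X)%classic (f p)) ->
  s = [::] \/ exists2 X, Fs X & forall p, List.In p s -> X (f p).
Proof.
move=> Fs_chain; elim: s => [|q s IH] sFs; first by left.
right; have [X FsX Xq] := sFs q (or_introl erefl).
have [->|[Y FsY sY]] := IH (fun p sp => sFs p (or_intror sp)).
  by exists X => // p [<-|].
have [XY|YX] := Fs_chain X Y FsX FsY.
  by exists Y => // p [<-|/sY//]; apply: XY.
by exists X => // p [<-|/sY/YX].
Qed.

Section Subspace.
Variables (K : fieldType) (V : lmodType K) (S : V -> Prop).
Hypothesis subS : subspace S.

Lemma subspace0 : S 0.
Proof. by case: subS. Qed.

Lemma subspaceD u v : S u -> S v -> S (u + v).
Proof. by case: subS => _ [SD _]; apply: SD. Qed.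

Lemma subspaceZ (c : K) v : S v -> S (c *: v).
Proof. by case: subS => _ [_ SZ]; apply: SZ. Qed.

Lemma subspaceN v : S v -> S (- v).
Proof. by rewrite -scaleN1r; apply: subspaceZ. Qed.

Lemma subspaceB u v : S u -> S v -> S (u - v).
Proof. by move=> Su Sv; apply: subspaceD => //; apply: subspaceN. Qed.

Lemma subspace_sum (I : Type) (s : seq I) (P : pred I) (f : I -> V) :
  (forall i, List.In i s -> P i -> S (f i)) -> S (\sum_(i <- s | P i) f i).
Proof.
elim: s => [|i s IH] Sf; first by rewrite big_nil; apply: subspace0.
rewrite big_cons; have Ss := IH (fun j sj => Sf j (or_intror sj)).
by case: ifP => // Pi; apply: subspaceD => //; apply: Sf => //; left.
Qed.

Lemma subspace_comb (s : seq (V * K)) (P : pred (V * K)) :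
  (forall p, List.In p s -> S p.1) -> S (\sum_(p <- s | P p) p.2 *: p.1).
Proof. by move=> Ss; apply: subspace_sum => p sp _; apply/subspaceZ/Ss. Qed.

End Subspace.

Lemma subspaceT (K : fieldType) (V : lmodType K) : subspace (fun _ : V => True).
Proof. by []. Qed.

Section Span.
Variables (K : fieldType) (V : lmodType K).

Definition lspan (F : V -> Prop) (v : V) :=
  exists sq : seq (V * K), (forall p, List.In p sq -> F p.1) /\ v = \sum_(p <- sq) p.2 *: p.1.

Lemma lspan0 F : lspan F 0.
Proof. by exists [::]; rewrite big_nil. Qed.

Lemma lspanD F u v : lspan F u -> lspan F v -> lspan F (u + v).
Proof.
move=> [su [Fsu ->]] [sv [Fsv ->]]; exists (su ++ sv); rewrite big_cat; split=> // p.
by move=> /(List.in_app_or su sv p) [/Fsu|/Fsv].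
Qed.

Lemma lspanS (F G : V -> Prop) v : (forall x, F x -> G x) -> lspan F v -> lspan G v.
Proof. by move=> FG [sq [Fsq ->]]; exists sq; split=> // p /Fsq /FG. Qed.

End Span.

(** * Filtrations on a subspace *)

Local Open Scope ereal_scope.

Section EmaxSeq.
Variables (R : realType) (T : Type).
Implicit Types (s : seq T) (P : pred T) (f : T -> \bar R).

Lemma emax_seq_nil P f : emax_seq [::] P f = -oo.
Proof. by rewrite /emax_seq big_nil. Qed.

Lemma emax_seq_cons p s P f :
  emax_seq (p :: s) P f = if P p then Order.max (f p) (emax_seq s P f) else emax_seq s P f.
Proof. by rewrite /emax_seq big_cons. Qed.

Lemma emax_seqID s P (Q : pred T) f :
  emax_seq s P f = Order.max (emax_seq s (predI P Q) f) (emax_seq s (predI P (predC Q)) f).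
Proof. by rewrite /emax_seq (bigID Q). Qed.

Lemma emax_seq_ub s P f p : List.In p s -> P p -> f p <= emax_seq s P f.
Proof.
elim: s => //= q s IH [->|/IH fp] Pp; rewrite emax_seq_cons.
  by rewrite Pp le_max lexx.
by case: ifP => _; rewrite ?le_max fp ?orbT.
Qed.

Lemma emax_seq_attained s P f : emax_seq s P f = -oo \/
  exists2 p, List.In p s /\ P p & f p = emax_seq s P f.
Proof.
elim: s => [|q s [IH|[p [sp Pp] fpE]]]; first by left; rewrite emax_seq_nil.
- rewrite emax_seq_cons IH; case: ifP => Pq; last by left.
  by right; exists q; [split=> //; left | rewrite max_l // leNye].
- rewrite emax_seq_cons; case: ifP => Pq; last by right; exists p => //; split=> //; right.
  right; rewrite -fpE; case: (leP (f q) (f p)) => _.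
    by exists p => //; split=> //; right.
  by exists q => //; split=> //; left.
Qed.

Lemma eq_in_emax_seq s P (f g : T -> \bar R) :
  (forall p, List.In p s -> P p -> f p = g p) -> emax_seq s P f = emax_seq s P g.
Proof.
elim: s => [|q s IH] fg; first by rewrite !emax_seq_nil.
rewrite !emax_seq_cons IH => [|p sp]; last exact: fg (or_intror sp).
by case: ifP => // Pq; rewrite fg //; left.
Qed.

End EmaxSeq.

Record filtration_on (R : realType) (K : fieldType) (V : lmodType K)
    (S : V -> Prop) (L : V -> \bar R) : Prop := FiltrationOn {
  filtration_subspace : subspace S;
  filtrationD_le : forall x y, S x -> S y -> L (x + y)%R <= Order.max (L x) (L y);
  filtrationZ_le : forall (c : K) x, S x -> L (c *: x)%R <= L x;
  filtration_eqNy : forall x, S x -> (L x = -oo <-> x = 0%R) }.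

Lemma filtration_fun_on (R : realType) (K : fieldType) (V : lmodType K)
    (S : V -> Prop) (L : V -> \bar R) :
  subspace S -> filtration_fun L -> filtration_on S L.
Proof.
move=> subS [_ [LNy Lcomb]]; split=> [//|x y _ _|c x _|x _]; last exact: LNy.
- have := Lcomb [:: (1%R, x); (1%R, y)].
  rewrite !emax_seq_cons emax_seq_nil !big_cons big_nil /= !scale1r addr0 oner_neq0.
  by rewrite (@max_l _ _ (L y) -oo) // leNye.
- have := Lcomb [:: (c, x)]; rewrite emax_seq_cons emax_seq_nil big_cons big_nil addr0 /=.
  have [->|c0] := eqVneq c 0%R; last by rewrite /= max_l // leNye.
  by rewrite scale0r /= => L0; apply: le_trans L0 _; rewrite leNye.
Qed.

Section FiltrationOn.
Variables (R : realType) (K : fieldType) (V : lmodType K).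
Variables (S : V -> Prop) (L : V -> \bar R).
Hypothesis fL : filtration_on S L.
Let subS := filtration_subspace fL.

Lemma filtration0 : L 0%R = -oo.
Proof. exact/(filtration_eqNy fL (subspace0 subS)). Qed.

Lemma filtration_gtNy x : S x -> x != 0%R -> -oo < L x.
Proof.
by move=> Sx x0; rewrite ltNge leeNy_eq; apply: contra x0 => /eqP/(filtration_eqNy fL Sx) ->.
Qed.

Lemma filtrationZ (c : K) x : c != 0%R -> S x -> L (c *: x)%R = L x.
Proof.
move=> c0 Sx; apply/eqP; rewrite eq_le (filtrationZ_le fL) //=.
rewrite -{1}(scale1r x) -(mulVf c0) -scalerA.
by apply: (filtrationZ_le fL); apply: subspaceZ.
Qed.

Lemma filtrationN x : S x -> L (- x)%R = L x.
Proof. by move=> Sx; rewrite -scaleN1r filtrationZ // oppr_eq0 oner_eq0. Qed.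

Lemma filtrationD_lt x y : S x -> S y -> L x < L y -> L (x + y)%R = L y.
Proof.
move=> Sx Sy Lxy; apply/eqP; rewrite eq_le (le_trans (filtrationD_le fL Sx Sy)) /=; last first.
  by rewrite ge_max lexx (ltW Lxy).
have := filtrationD_le fL (subspaceD subS Sx Sy) (subspaceN subS Sx).
by rewrite addrC addKr filtrationN // le_max [L y <= L x]leNgt Lxy orbF.
Qed.

Lemma filtrationD_ge_max x y : S x -> S y -> L x <= L (x + y)%R ->
  L (x + y)%R = Order.max (L x) (L y).
Proof.
move=> Sx Sy Lxy; have [yx|xy] := leP (L y) (L x).
  apply/eqP; rewrite eq_le Lxy andbT.
  by apply: le_trans (filtrationD_le fL Sx Sy) _; rewrite ge_max lexx yx.
by rewrite filtrationD_lt.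
Qed.

Lemma filtration_comb_le (s : seq (V * K)) (P : pred (V * K)) m :
  (forall p, List.In p s -> S p.1) ->
  (forall p, List.In p s -> P p -> p.2 != 0%R -> L p.1 <= m) ->
  L (\sum_(p <- s | P p) p.2 *: p.1)%R <= m.
Proof.
elim: s => [|q s IH] Ss Lm; first by rewrite big_nil filtration0 leNye.
have Ls := IH (fun p sp => Ss p (or_intror sp)) (fun p sp => Lm p (or_intror sp)).
rewrite big_cons; case: ifP => // Pq.
apply: le_trans (filtrationD_le fL (subspaceZ subS _ (Ss q (or_introl erefl))) _) _.
  by apply: subspace_comb => // p sp; apply: Ss; right.
rewrite ge_max Ls andbT; have [->|q0] := eqVneq q.2 0%R.
  by rewrite scale0r filtration0 leNye.
by rewrite filtrationZ //; [apply: Lm => //; left | apply: Ss; left].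
Qed.

Lemma filtration_comb_lt (s : seq (V * K)) (P : pred (V * K)) m : -oo < m ->
  (forall p, List.In p s -> S p.1) ->
  (forall p, List.In p s -> P p -> p.2 != 0%R -> L p.1 < m) ->
  L (\sum_(p <- s | P p) p.2 *: p.1)%R < m.
Proof.
move=> m0; elim: s => [|q s IH] Ss Lm; first by rewrite big_nil filtration0.
have Ls := IH (fun p sp => Ss p (or_intror sp)) (fun p sp => Lm p (or_intror sp)).
rewrite big_cons; case: ifP => // Pq.
apply: le_lt_trans (filtrationD_le fL (subspaceZ subS _ (Ss q (or_introl erefl))) _) _.
  by apply: subspace_comb => // p sp; apply: Ss; right.
rewrite gt_max Ls andbT; have [->|q0] := eqVneq q.2 0%R.
  by rewrite scale0r filtration0.
by rewrite filtrationZ //; [apply: Lm => //; left | apply: Ss; left].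
Qed.

End FiltrationOn.

Local Close Scope ereal_scope.

(** * Well-foundedness from best approximation *)

Definition best_approx_on (R : realType) (K : fieldType) (V : lmodType K)
    (S : V -> Prop) (L : V -> \bar R) :=
  forall W : V -> Prop, subspace W -> (forall w, W w -> S w) ->
  forall v, S v -> ~ W v ->
  exists2 w0, W w0 & forall w, W w -> (L (v - w0)%R <= L (v - w)%R)%E.

Lemma best_approximation_on (R : realType) (K : fieldType) (V : lmodType K)
    (S : V -> Prop) (L : V -> \bar R) :
  best_approximation L -> best_approx_on S L.
Proof. by move=> bL W subW _ v _ Wv; apply: (bL W subW _ v Wv); exists v. Qed.

Section DescendingChain.
Variables (R : realType) (K : fieldType) (V : lmodType K).
Variables (S : V -> Prop) (L : V -> \bar R).
Hypotheses (fL : filtration_on S L) (bL : best_approx_on S L).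
Let subS := filtration_subspace fL.
Variable g : nat -> V.
Hypotheses (Sg : forall n, S (g n)) (Lg : forall n, (L (g n.+1) < L (g n))%E).

Definition gcomb N (a : nat -> K) := \sum_(i < N) a i *: g i.

Lemma gcomb_in N a : S (gcomb N a).
Proof. by apply: (subspace_sum subS) => i _ _; apply/(subspaceZ subS)/Sg. Qed.

Lemma gcomb_widen N M a : (N <= M)%N ->
  gcomb M (fun i => if (i < N)%N then a i else 0) = gcomb N a.
Proof.
move=> NM; rewrite /gcomb -(sum_widen (fun i => a i *: g i) NM).
by apply: eq_bigr => i _; case: ifP; rewrite ?scale0r.
Qed.

Lemma gcomb_delta N k : (k < N)%N -> gcomb N (fun i => (i == k)%:R) = g k.
Proof.
move=> kN; rewrite -(sum_nat_delta g kN).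
by apply: eq_bigr => i _; case: eqP; rewrite ?scale1r ?scale0r.
Qed.

Lemma sum_delta N k : (k < N)%N -> \sum_(i < N) ((i : nat) == k)%:R = 1 :> K.
Proof.
move=> kN; rewrite -[RHS](sum_nat_delta (fun _ => 1) kN).
by apply: eq_bigr => i _; case: eqP.
Qed.

(* The first nonzero coefficient dominates, since the g i strictly decrease. *)
Lemma gcomb_gt N a : (exists2 i, (i < N)%N & a i != 0) -> (L (g N) < L (gcomb N a))%E.
Proof.
elim: N => [[i //]|N IH] [i iN ai]; rewrite /gcomb big_ord_recr /= -/(gcomb N a).
have [[j jN aj]|] := pselect (exists2 j, (j < N)%N & a j != 0).
  have LgN := IH (ex_intro2 _ _ j jN aj).
  have [->|aN] := eqVneq (a N) 0; first by rewrite scale0r addr0 (lt_trans (Lg N)).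
  rewrite addrC (filtrationD_lt fL) ?(lt_trans (Lg N)) //.
  - exact: (subspaceZ subS).
  - exact: gcomb_in.
  - by rewrite (filtrationZ fL) // (lt_trans (Lg N)).
move=> noj; have -> : gcomb N a = 0.
  apply: big1 => j _; have [->|aj] := eqVneq (a j) 0; first by rewrite scale0r.
  by case: noj; exists j.
have aN : a N != 0.
  move: iN ai; rewrite ltnS leq_eqVlt => /orP[/eqP -> //|iN ai].
  by case: noj; exists i.
by rewrite add0r (filtrationZ fL).
Qed.

Lemma gcomb_sum1_gt N (a : nat -> K) : \sum_(i < N) a i = 1 -> (L (g N) < L (gcomb N a))%E.
Proof.
move=> a1; apply: gcomb_gt; apply: contrapT => noi.
move: a1; rewrite big1 => [/eqP|i _]; first by rewrite eq_sym oner_eq0.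
by apply: contrapT => ai; apply: noi; exists i => //; apply/eqP.
Qed.

Definition zero_sum_gcomb x := exists N (a : nat -> K), \sum_(i < N) a i = 0 /\ x = gcomb N a.

Lemma zero_sum_gcomb_in w : zero_sum_gcomb w -> S w.
Proof. by case=> N [a [_ ->]]; apply: gcomb_in. Qed.

Lemma zero_sum_gcomb_subspace : subspace zero_sum_gcomb.
Proof.
split; first by exists 0%N, (fun _ => 0); rewrite /gcomb !big_ord0.
split=> [u v [N [a [a0 ->]]] [M [b [b0 ->]]]|c v [N [a [a0 ->]]]].
  exists (N + M)%N, (fun i => (if (i < N)%N then a i else 0) + (if (i < M)%N then b i else 0)).
  rewrite big_split /= !sum_widen ?leq_addr ?leq_addl // a0 b0 addr0; split=> //.
  rewrite -(gcomb_widen a (leq_addr M N)) -(gcomb_widen b (leq_addl N M)).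
  by rewrite /gcomb -big_split /=; apply: eq_bigr => i _; rewrite scalerDl.
exists N, (fun i => c * a i); rewrite -mulr_sumr a0 mulr0; split=> //.
by rewrite /gcomb scaler_sumr; apply: eq_bigr => i _; rewrite scalerA.
Qed.

Lemma g0_sub_zero_sum_gcomb w : zero_sum_gcomb w ->
  exists N (b : nat -> K), \sum_(i < N) b i = 1 /\ g 0%N - w = gcomb N b.
Proof.
case=> N [a [a0 ->]]; exists N.+1, (fun i => (i == 0%N)%:R - (if (i < N)%N then a i else 0)).
rewrite sumrB sum_delta // sum_widen // a0 subr0; split=> //.
rewrite -{1}(gcomb_delta (ltn0Sn N)) -(gcomb_widen a (leqnSn N)) /gcomb -sumrB.
by apply: eq_bigr => i _; rewrite scalerBl.
Qed.

(* A best approximation w of [g 0] among zero-sum combinations would satisfy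
   L (g 0 - w) > L (g N) = L (g 0 - (g 0 - g N)) for N beyond the support of w. *)
Lemma no_descending_chain : False.
Proof.
have W0 : ~ zero_sum_gcomb (g 0%N).
  move=> /g0_sub_zero_sum_gcomb [N [b [b1]]]; rewrite subrr => /esym gb0.
  by have := gcomb_sum1_gt b1; rewrite gb0 (filtration0 fL) ltNge leNye.
have [w0 /g0_sub_zero_sum_gcomb [N [b [b1 gw0]]] w0_best] :=
  bL zero_sum_gcomb_subspace zero_sum_gcomb_in (Sg 0%N) W0.
have WN : zero_sum_gcomb (g 0%N - g N).
  exists N.+1, (fun i => (i == 0%N)%:R - (i == N)%:R); rewrite sumrB !sum_delta // subrr.
  split=> //; rewrite -(gcomb_delta (ltn0Sn N)) -(gcomb_delta (ltnSn N)) /gcomb -sumrB.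
  by apply: eq_bigr => i _; rewrite scalerBl.
have := w0_best _ WN; rewrite subKr gw0.
by move=> /(lt_le_trans (gcomb_sum1_gt b1)); rewrite ltxx.
Qed.

End DescendingChain.

Definition filtration_wf (R : realType) (K : fieldType) (V : lmodType K)
    (S : V -> Prop) (L : V -> \bar R) :=
  forall P : V -> Prop,
    (forall v, S v -> (forall u, S u -> (L u < L v)%E -> P u) -> P v) ->
  forall v, S v -> P v.

Lemma best_approx_on_wf (R : realType) (K : fieldType) (V : lmodType K)
    (S : V -> Prop) (L : V -> \bar R) :
  filtration_on S L -> best_approx_on S L -> filtration_wf S L.
Proof.
move=> fL bL P Pind v0 Sv0; apply: contrapT => Pv0.
have down v : S v /\ ~ P v -> {u | (S u /\ ~ P u) /\ (L u < L v)%E}.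
  case=> Sv Pv; apply: cid; apply: contrapT => nou; apply: Pv; apply: Pind => // u Su Luv.
  by apply: contrapT => Pu; apply: nou; exists u.
pose next (b : {v | S v /\ ~ P v}) : {v | S v /\ ~ P v} :=
  exist _ _ (proj1 (svalP (down _ (svalP b)))).
pose g n := sval (iter n next (exist _ v0 (conj Sv0 Pv0))).
apply: (no_descending_chain fL bL (g := g)) => n.
  exact: (proj1 (svalP (iter n next _))).
by rewrite /g iterS; exact: (proj2 (svalP (down _ _))).
Qed.

Lemma filtration_wf_pair (R : realType) (K : fieldType) (V : lmodType K)
    (S : V -> Prop) (L1 L2 : V -> \bar R) :
  filtration_wf S L1 -> filtration_wf S L2 ->
  forall P : V -> Prop,
    (forall v, S v -> (forall u, S u -> (L1 u <= L1 v)%E -> (L2 u <= L2 v)%E ->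
       (L1 u < L1 v)%E \/ (L2 u < L2 v)%E -> P u) -> P v) ->
  forall v, S v -> P v.
Proof.
move=> wf1 wf2 P Pind.
suff PL1 : forall v, S v -> forall u, S u -> (L1 u <= L1 v)%E -> P u.
  by move=> v Sv; apply: (PL1 v Sv v Sv).
apply: wf1 => v Sv IH1.
apply: (wf2 (fun u => (L1 u <= L1 v)%E -> P u)) => u Su IH2 uv.
apply: Pind => // w Sw w1 w2 [lt1|lt2].
- exact: (IH1 w Sw (lt_le_trans lt1 uv) w Sw).
- exact: IH2 (le_trans w1 uv).
Qed.

(** * Simultaneously orthogonal bases of two filtrations *)

Section Bifiltration.
Variables (R : realType) (K : fieldType) (V : lmodType K) (S : V -> Prop).

Implicit Types (F : V -> Prop).

Definition strictly_below (L1 L2 : V -> \bar R) s t x :=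
  exists a b, S a /\ S b /\ x = a + b /\
    (L1 a < s)%E /\ (L2 a <= t)%E /\ (L1 b <= s)%E /\ (L2 b < t)%E.

Record bifree (L1 L2 : V -> \bar R) F : Prop := Bifree {
  bifree_nonzero : forall v, F v -> S v /\ v != 0;
  bifree_indep : forall s t (sq : seq (V * K)), List.NoDup (map fst sq) ->
    (forall p, List.In p sq -> F p.1 /\ L1 p.1 = s /\ L2 p.1 = t) ->
    strictly_below L1 L2 s t (\sum_(p <- sq) p.2 *: p.1) ->
    forall p, List.In p sq -> p.2 = 0 }.

Lemma strictly_below_swap (L1 L2 : V -> \bar R) s t x :
  strictly_below L1 L2 s t x -> strictly_below L2 L1 t s x.
Proof. by case=> a [b [Sa [Sb [-> [? [? [? ?]]]]]]]; exists b, a; rewrite addrC. Qed.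

Lemma bifree_swap (L1 L2 : V -> \bar R) F : bifree L1 L2 F -> bifree L2 L1 F.
Proof.
case=> F0 Find; split=> // s t sq nd Fsq /strictly_below_swap below.
by apply: Find nd _ below => p /Fsq [? [? ?]].
Qed.

Variables (L1 L2 : V -> \bar R).
Hypotheses (fL1 : filtration_on S L1) (fL2 : filtration_on S L2).
Let subS := filtration_subspace fL1.

Lemma strictly_below0 s t : (-oo < s)%E -> (-oo < t)%E -> strictly_below L1 L2 s t 0.
Proof.
move=> s0 t0; exists 0, 0; rewrite addr0 (filtration0 fL1) (filtration0 fL2).
by rewrite !leNye s0 t0; do !split; apply: subspace0.
Qed.

Lemma strictly_belowZ s t (c : K) x :
  strictly_below L1 L2 s t x -> strictly_below L1 L2 s t (c *: x).
Proof.
case=> a [b [Sa [Sb [-> [a1 [a2 [b1 b2]]]]]]]; exists (c *: a), (c *: b).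
do 2 (split; first exact: subspaceZ); split; first by rewrite scalerDr.
split; first exact: le_lt_trans (filtrationZ_le fL1 c Sa) a1.
split; first exact: le_trans (filtrationZ_le fL2 c Sa) a2.
split; first exact: le_trans (filtrationZ_le fL1 c Sb) b1.
exact: le_lt_trans (filtrationZ_le fL2 c Sb) b2.
Qed.

(* If a combination has first degree below its top degree [M], its terms of
   bidegree (M, t) sum to a strictly lower element; for [t] maximal this
   contradicts bifreeness. *)
Lemma top_terms_strictly_below (sq : seq (V * K)) M t : (-oo < t)%E ->
  (forall p, List.In p sq -> S p.1) ->
  (L1 (\sum_(p <- sq) p.2 *: p.1) < M)%E ->
  (forall p, List.In p sq -> p.2 != 0 -> (L1 p.1 <= M)%E) ->
  (forall p, List.In p sq -> p.2 != 0 -> L1 p.1 = M -> (L2 p.1 <= t)%E) ->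
  strictly_below L1 L2 M t
    (\sum_(p <- sq | (L1 p.1 == M) && (L2 p.1 == t)) p.2 *: p.1).
Proof.
move=> t0 Ssq sumM sqM sqt; have Ssum P := subspace_comb subS P Ssq.
have M0 : (-oo < M)%E by apply: le_lt_trans sumM; rewrite leNye.
set top := \sum_(p <- sq | L1 p.1 == M) p.2 *: p.1.
set rest := \sum_(p <- sq | (L1 p.1 == M) && (L2 p.1 != t)) p.2 *: p.1.
have bot_lt : (L1 (\sum_(p <- sq | L1 p.1 != M) p.2 *: p.1) < M)%E.
  apply: (filtration_comb_lt fL1) => // p sp pM p0.
  by rewrite lt_neqAle pM sqM.
have top_lt : (L1 top < M)%E.
  have -> : top = \sum_(p <- sq) p.2 *: p.1 - \sum_(p <- sq | L1 p.1 != M) p.2 *: p.1.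
    by rewrite [X in X - _](bigID (fun p => L1 p.1 == M)) addrK.
  apply: le_lt_trans (filtrationD_le fL1 (Ssum _) (subspaceN subS (Ssum _))) _.
  by rewrite gt_max sumM (filtrationN fL1).
exists top, (- rest); split; first exact: Ssum.
split; first exact/(subspaceN subS)/Ssum.
split; first by rewrite /top [X in _ = X - _](bigID (fun p => L2 p.1 == t)) /= addrK.
rewrite (filtrationN fL1 (Ssum _)) (filtrationN fL2 (Ssum _)); split=> //.
split; first by apply: (filtration_comb_le fL2) => // p sp /eqP pM p0; apply: sqt.
split; first by apply: (filtration_comb_le fL1) => // p sp /andP [/eqP pM _] p0; apply: sqM.
apply: (filtration_comb_lt fL2) => // p sp /andP [/eqP pM pt] p0.
by rewrite lt_neqAle pt sqt.
Qed.

Lemma bifree_orthogonal F : bifree L1 L2 F ->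
  forall sq : seq (V * K), List.NoDup (map fst sq) -> (forall p, List.In p sq -> F p.1) ->
  L1 (\sum_(p <- sq) p.2 *: p.1) = emax_seq sq (fun p => p.2 != 0) (fun p => L1 p.1).
Proof.
move=> [F0 Find] sq nd Fsq; have Ssq p (sp : List.In p sq) := (F0 _ (Fsq p sp)).1.
set M := emax_seq _ _ _.
have sqM p : List.In p sq -> p.2 != 0 -> (L1 p.1 <= M)%E.
  by move=> sp p0; apply: (emax_seq_ub (fun p => L1 p.1) sp).
apply/eqP; rewrite eq_le (filtration_comb_le fL1) // => [|p sp _]; last exact: sqM.
have [MNy|[p0 [sp0 p00] p0M]] := emax_seq_attained sq (fun p => p.2 != 0) (fun p => L1 p.1).
  by rewrite /M MNy leNye.
rewrite -/M in p0M.
rewrite leNgt; apply/negP => sum_lt.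
pose t := emax_seq sq (fun p => (p.2 != 0) && (L1 p.1 == M)) (fun p => L2 p.1).
have sqt p : List.In p sq -> p.2 != 0 -> L1 p.1 = M -> (L2 p.1 <= t)%E.
  by move=> sp p_0 pM; apply: (emax_seq_ub (fun p => L2 p.1) sp); rewrite p_0 pM eqxx.
have t0 : (-oo < t)%E.
  apply: lt_le_trans (sqt p0 sp0 p00 p0M).
  by apply: (filtration_gtNy fL2); [exact: Ssq | exact: (F0 _ (Fsq p0 sp0)).2].
have [tNy|[p1 [sp1 /andP [p10 /eqP p1M]] p1t]] :=
  emax_seq_attained sq (fun p => (p.2 != 0) && (L1 p.1 == M)) (fun p => L2 p.1).
  by move: t0; rewrite /t tNy ltxx.
have := top_terms_strictly_below t0 Ssq sum_lt sqM sqt; rewrite -big_filter.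
move=> /(Find M t _ (NoDup_map_filter _ nd)) p_0; move: p10; rewrite p_0 ?eqxx //.
  by move=> p /List.filter_In [sp /andP [/eqP pM /eqP pt]]; split=> //; exact: Fsq.
by apply/List.filter_In; rewrite p1M p1t !eqxx.
Qed.

Lemma bifree_bigcup (Fs : set (set V)) :
  (Fs `<=` bifree L1 L2)%classic -> total_on Fs subset ->
  bifree L1 L2 (\bigcup_(X in Fs) X)%classic.
Proof.
move=> Fs_bifree Fs_chain; split=> [v [X FsX Xv]|s t sq nd Fsq below].
  exact: (bifree_nonzero (Fs_bifree X FsX)).
have [->//|[X FsX Xsq]] := chain_bigcup_seq Fs_chain (fun p sp => (Fsq p sp).1).
apply: (bifree_indep (Fs_bifree X FsX)) nd _ below => p sp.
by have [_ ?] := Fsq p sp; split=> //; exact: Xsq.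
Qed.

Definition bidegree_reducible F v := exists sq : seq (V * K),
  (forall p, List.In p sq -> F p.1 /\ L1 p.1 = L1 v /\ L2 p.1 = L2 v) /\
  strictly_below L1 L2 (L1 v) (L2 v) (v - \sum_(p <- sq) p.2 *: p.1).

Lemma sum_fst_split (sq : seq (V * K)) v :
  \sum_(p <- sq) p.2 *: p.1 =
  (\sum_(p <- sq | p.1 == v) p.2) *: v + \sum_(p <- filter (fun p => p.1 != v) sq) p.2 *: p.1.
Proof.
rewrite (bigID (fun p => p.1 == v)) /= big_filter scaler_suml.
by congr (_ + _); apply: eq_bigr => p /eqP ->.
Qed.

Lemma bifree_extend F v : bifree L1 L2 F -> S v -> v != 0 -> ~ bidegree_reducible F v ->
  bifree L1 L2 (fun x => F x \/ x = v).
Proof.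
move=> [F0 Find] Sv v0 irr; split=> [x [/F0 //|->]|s t sq nd Fsq below]; first by split.
pose c := \sum_(p <- sq | p.1 == v) p.2.
pose rest := filter (fun p => p.1 != v) sq.
have Frest p : List.In p rest -> F p.1 /\ L1 p.1 = s /\ L2 p.1 = t.
  move=> /List.filter_In [sp pv]; have [[//|pvE] ?] := Fsq p sp.
  by rewrite pvE eqxx in pv.
have [c0|c_0] := eqVneq c 0.
  rewrite (sum_fst_split _ v) -/c c0 scale0r add0r in below.
  have rest0 := Find s t rest (NoDup_map_filter _ nd) Frest below.
  move=> p sp; have [pv|pv] := eqVneq p.1 v; last by apply: rest0; apply/List.filter_In.
  by rewrite -(sum_snd_same_fst nd sp) pv.
have [q [sq_q qv]] : exists q, List.In q sq /\ q.1 = v.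
  apply: contrapT => noq; move/eqP: c_0; apply; apply: big1_In => q sq_q /eqP qv.
  by case: noq; exists q.
have [_ [qs qt]] := Fsq q sq_q; rewrite qv in qs qt; subst s t.
case: irr; exists (map (fun p => (p.1, - (c^-1 * p.2))) rest); split.
  by move=> p /List.in_map_iff [r [<- /Frest]].
have -> : v - \sum_(p <- map (fun p => (p.1, - (c^-1 * p.2))) rest) p.2 *: p.1 =
    c^-1 *: \sum_(p <- sq) p.2 *: p.1.
  rewrite big_map (sum_fst_split _ v) scalerDr scalerA mulVf // scale1r scaler_sumr -sumrN.
  by congr (_ + _); apply: eq_bigr => p _; rewrite scaleNr opprK scalerA.
exact: strictly_belowZ.
Qed.

Hypotheses (wf1 : filtration_wf S L1) (wf2 : filtration_wf S L2).

Lemma bifree_spanning_exists : exists F, bifree L1 L2 F /\ forall v, S v -> lspan F v.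
Proof.
have [F [Fbifree Fmax]] := Zorn_bigcup bifree_bigcup.
exists F; split=> //; have [F0 _] := Fbifree.
apply: (filtration_wf_pair wf1 wf2) => v Sv IH.
have [->|v0] := eqVneq v 0; first exact: lspan0.
have [[sq [Fsq [a [b [Sa [Sb [ab [a1 [a2 [b1 b2]]]]]]]]]]|irr] :=
  pselect (bidegree_reducible F v).
  rewrite -[v](subrK (\sum_(p <- sq) p.2 *: p.1)) ab; apply: lspanD; last first.
    by exists sq; split=> // p /Fsq [].
  by apply: lspanD; apply: IH => //; rewrite ?ltW //; [left | right].
have Fv : ~ F v.
  move=> Fv; apply: irr; exists [:: (v, 1)]; split=> [p [<-|]//|].
  rewrite big_cons big_nil scale1r addr0 subrr.
  by apply: strictly_below0; apply: (filtration_gtNy _ Sv).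
case: (Fmax (fun x => F x \/ x = v)); last exact: bifree_extend.
by split=> [x Fx|FvF]; [left | apply/Fv/FvF; right].
Qed.

End Bifiltration.

Section Families.
Variables (R : realType) (K : fieldType) (V : lmodType K) (J : Type) (b : J -> V).

Definition terms (s : seq (J * K)) := map (fun p => (b p.1, p.2)) s.

Lemma sum_terms (s : seq (J * K)) (P : pred (J * K)) :
  \sum_(p <- s | P p) p.2 *: b p.1 = \sum_(q <- terms (filter P s)) q.2 *: q.1.
Proof. by rewrite /terms big_map big_filter. Qed.

Lemma emax_seq_terms (l : V -> \bar R) (s : seq (J * K)) (P : pred (J * K)) :
  emax_seq (terms (filter P s)) (fun q => q.2 != 0) (fun q => l q.1) =
  emax_seq s (predI (fun p => p.2 != 0) P) (fun p => l (b p.1)).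
Proof. by rewrite /emax_seq /terms big_map big_filter_cond; apply: eq_bigl => p; rewrite andbC. Qed.

Lemma NoDup_terms (s : seq (J * K)) : (forall i i', b i = b i' -> i = i') ->
  List.NoDup (map fst s) -> List.NoDup (map fst (terms s)).
Proof.
move=> b_inj nd; rewrite /terms -map_comp (_ : _ \o _ = b \o fst) // map_comp.
by apply: (@List.NoDup_map_NoDup_ForallPairs _ _ b) => // i i' _ _; exact: b_inj.
Qed.

Lemma l_orthogonal_free (l : V -> \bar R) : filtration_fun l -> l_orthogonal l b ->
  forall s : seq (J * K), List.NoDup (map fst s) ->
  \sum_(p <- s) p.2 *: b p.1 = 0 -> forall p, List.In p s -> p.2 = 0.
Proof.
move=> [_ [lNy _]] [_ [b0 orth]] s nd s0 p sp; apply/eqP; apply: contraT => p0.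
have := emax_seq_ub (P := fun p => p.2 != 0) (fun p => l (b p.1)) sp p0.
rewrite -orth // s0 (proj2 (lNy 0) erefl) leeNy_eq => /eqP/lNy bp0.
by move: (b0 p.1); rewrite bp0 eqxx.
Qed.

Lemma l_orthogonal_is_basis (l : V -> \bar R) : filtration_fun l -> l_orthogonal l b ->
  (forall v, exists s : seq (J * K), v = \sum_(p <- s) p.2 *: b p.1) -> is_basis b.
Proof.
move=> fl orth span; split; first exact: orth.1.
by split=> //; exact: (l_orthogonal_free fl orth).
Qed.

Lemma lspan_family (F : V -> Prop) v : (forall x, F x -> exists i, b i = x) ->
  lspan F v -> exists s : seq (J * K), v = \sum_(p <- s) p.2 *: b p.1.
Proof.
move=> Fb [sq [Fsq ->]]; elim: sq Fsq => [|[x c] sq IH] Fsq.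
  by exists [::]; rewrite !big_nil.
have [s sE] := IH (fun p sp => Fsq p (or_intror sp)).
have [i <-] := Fb x (Fsq _ (or_introl erefl)).
by exists ((i, c) :: s); rewrite !big_cons sE.
Qed.

End Families.

(** * Adapted bases of an acyclic complex *)

Section ChainComplex.
Variables (R : realType) (K : fieldType) (A : int -> lmodType K).
Variables (d : forall k : int, {linear A (k + 1) -> A k}) (l : forall k : int, A k -> \bar R).
Arguments l : clear implicits.
Arguments d : clear implicits.
Hypotheses (A_cc : ascending_chain_complex d l) (A_exact : acyclic d).
Hypothesis A_best : forall k, best_approximation (l k).

Let dd : forall k (x : A (k + 1 + 1)), d k (d (k + 1) x) = 0 := A_cc.1.
Let l_filt k : filtration_on (fun _ => True) (l k) :=
  filtration_fun_on (subspaceT _) (A_cc.2.1 k).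

Definition dimg j (x : A j) := exists y, d j y = x.

Lemma dimg_subspace j : subspace (@dimg j).
Proof.
split; first by exists 0; rewrite linear0.
split=> [u v [y <-] [z <-]|c v [y <-]]; first by exists (y + z); rewrite linearD.
by exists (c *: y); rewrite linearZ.
Qed.

Lemma dker_subspace j : subspace (fun y : A (j + 1) => d j y = 0).
Proof.
split; first by rewrite linear0.
split=> [u v du dv|c v dv]; first by rewrite linearD du dv addr0.
by rewrite linearZZ dv scaler0.
Qed.

Lemma min_lift_ex j (x : A j) : exists y : A (j + 1),
  dimg x -> d j y = x /\ forall y', d j y' = x -> (l (j + 1) y <= l (j + 1) y')%E.
Proof.
have [[y0 y0x]|nx] := pselect (dimg x); last by exists 0.
have [->|x0] := eqVneq x 0.
  by exists 0 => _; rewrite linear0 (filtration0 (l_filt _)); split=> // y _; rewrite leNye.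
have y0_ker : d j y0 <> 0 by rewrite y0x; apply/eqP.
have [w0 dw0 w0_best] := A_best (dker_subspace j) (ex_intro _ y0 y0_ker) y0_ker.
exists (y0 - w0) => _; split; first by rewrite linearB y0x dw0 subr0.
move=> y yx; have := w0_best (y0 - y); rewrite subKr; apply.
by rewrite linearB y0x yx subrr.
Qed.

Definition min_lift j (x : A j) : A (j + 1) := sval (cid (min_lift_ex x)).

Lemma min_liftP j (x : A j) : dimg x ->
  d j (min_lift x) = x /\ forall y, d j y = x -> (l (j + 1) (min_lift x) <= l (j + 1) y)%E.
Proof. exact: svalP (cid (min_lift_ex x)). Qed.

Definition lift_norm j (x : A j) := l (j + 1) (min_lift x).

Lemma filtration_dimg j : filtration_on (@dimg j) (l j).
Proof. exact: filtration_fun_on (dimg_subspace j) (A_cc.2.1 j). Qed.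

Lemma filtration_lift_norm j : filtration_on (@dimg j) (@lift_norm j).
Proof.
split=> [|x y dx dy|c x dx|x dx]; first exact: dimg_subspace.
- have [lx _] := min_liftP dx; have [ly _] := min_liftP dy.
  have dxy : dimg (x + y) by exact: (subspaceD (dimg_subspace j) dx dy).
  apply: le_trans ((min_liftP dxy).2 (min_lift x + min_lift y) _) _.
    by rewrite linearD lx ly.
  exact: (filtrationD_le (l_filt (j + 1)) I I).
- have [lx _] := min_liftP dx.
  have dcx : dimg (c *: x) by exact: (subspaceZ (dimg_subspace j) c dx).
  apply: le_trans ((min_liftP dcx).2 (c *: min_lift x) _) _; first by rewrite linearZ lx.
  exact: (filtrationZ_le (l_filt (j + 1)) c I).
- split=> [/(filtration_eqNy (l_filt _) I) lx0|->].
    by have [<- _] := min_liftP dx; rewrite lx0 linear0.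
  have d0 : dimg (0 : A j) by apply: subspace0 (dimg_subspace j).
  apply/eqP; rewrite eq_le leNye andbT -(filtration0 (l_filt (j + 1))) /lift_norm.
  by apply: (min_liftP d0).2; rewrite linear0.
Qed.

(* A best approximation of [min_lift v] by lifts of [W] maps to one of [v] by [W]. *)
Lemma best_approx_lift_norm j : best_approx_on (@dimg j) (@lift_norm j).
Proof.
move=> W subW Wdimg v dv Wv.
pose W' (y : A (j + 1)) := W (d j y).
have subW' : subspace W'.
  rewrite /W'; split; first by rewrite linear0; apply: subspace0.
  split=> [u w Wu Ww|c w Ww]; first by rewrite linearD; apply: subspaceD.
  by rewrite linearZ; apply: subspaceZ.
have [lv _] := min_liftP dv.
have W'v : ~ W' (min_lift v) by rewrite /W' lv.
have [y0 W'y0 y0_best] := A_best subW' (ex_intro (fun y => ~ W' y) _ W'v) W'v.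
exists (d j y0) => // w Ww.
have dvy0 : dimg (v - d j y0) by exact: (subspaceB (dimg_subspace j) dv (ex_intro _ y0 erefl)).
have dvw : dimg (v - w) by exact: (subspaceB (dimg_subspace j) dv (Wdimg w Ww)).
apply: le_trans ((min_liftP dvy0).2 (min_lift v - y0) _) _; first by rewrite linearB lv.
have [lvw _] := min_liftP dvw.
have := y0_best (min_lift v - min_lift (v - w)); rewrite subKr; apply.
by rewrite /W' linearB lv lvw subKr.
Qed.

Lemma dimg_bifree_spanning j :
  exists F, bifree (@dimg j) (l j) (@lift_norm j) F /\ forall v, dimg v -> lspan F v.
Proof.
apply: bifree_spanning_exists (filtration_dimg j) (filtration_lift_norm j) _ _.
- exact (best_approx_on_wf (filtration_dimg j) (best_approximation_on (@A_best j))).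
- exact (best_approx_on_wf (filtration_lift_norm j) (@best_approx_lift_norm j)).
Qed.

Definition dbasis j : A j -> Prop := sval (cid (dimg_bifree_spanning j)).

Lemma dbasisP j :
  bifree (@dimg j) (l j) (@lift_norm j) (@dbasis j) /\ forall v, dimg v -> lspan (@dbasis j) v.
Proof. exact: svalP (cid (dimg_bifree_spanning j)). Qed.

Lemma dbasis_dimg j (x : A j) : dbasis x -> dimg x /\ x != 0.
Proof. exact: bifree_nonzero (dbasisP j).1 x. Qed.

Definition lifted j (y : A (j + 1)) := exists2 x, dbasis x & y = min_lift x.

Lemma lifted_d j (y : A (j + 1)) : lifted y -> dbasis (d j y) /\ min_lift (d j y) = y.
Proof. by case=> x bx ->; have [lx _] := min_liftP (dbasis_dimg bx).1; rewrite lx. Qed.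

Lemma lifted_inj j (y y' : A (j + 1)) : lifted y -> lifted y' -> d j y = d j y' -> y = y'.
Proof. by move=> /lifted_d [_ ey] /lifted_d [_ ey'] dyy'; rewrite -ey -ey' dyy'. Qed.

Lemma lifted_d_neq0 j (y : A (j + 1)) : lifted y -> d j y != 0.
Proof. by move=> /lifted_d [/dbasis_dimg []]. Qed.

(* This is where the orthogonality of [dbasis] for [lift_norm] is used. *)
Lemma lifted_comb_minimal j (s : seq (A (j + 1) * K)) :
  List.NoDup (map fst s) -> (forall p, List.In p s -> lifted p.1) ->
  l (j + 1) (\sum_(p <- s) p.2 *: p.1) = emax_seq s (fun p => p.2 != 0) (fun p => l (j + 1) p.1) /\
  forall y, d j y = d j (\sum_(p <- s) p.2 *: p.1) ->
    (l (j + 1) (\sum_(p <- s) p.2 *: p.1) <= l (j + 1) y)%E.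
Proof.
move=> nd s_lifted; set y := \sum_(p <- s) p.2 *: p.1.
pose xs := map (fun p => (d j p.1, p.2)) s.
have nd_xs : List.NoDup (map fst xs).
  rewrite -map_comp (_ : _ \o _ = d j \o fst) // map_comp.
  apply: List.NoDup_map_NoDup_ForallPairs nd => p q /List.in_map_iff [p' [<- sp']].
  by move=> /List.in_map_iff [q' [<- sq']]; apply: lifted_inj; apply: s_lifted.
have xs_dbasis p : List.In p xs -> dbasis p.1.
  by move=> /List.in_map_iff [q [<- sq]]; exact: (lifted_d (s_lifted q sq)).1.
have dy : d j y = \sum_(p <- xs) p.2 *: p.1.
  by rewrite big_map linear_sum; apply: eq_bigr => p _; rewrite linearZ.
have ly := bifree_orthogonal (filtration_lift_norm j) (filtration_dimg j)
  (bifree_swap (dbasisP j).1) nd_xs xs_dbasis.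
have xs_s : emax_seq xs (fun p => p.2 != 0) (fun p => lift_norm p.1) =
    emax_seq s (fun p => p.2 != 0) (fun p => l (j + 1) p.1).
  rewrite /emax_seq big_map -/(emax_seq _ _ _); apply: eq_in_emax_seq => p sp _.
  by rewrite /lift_norm (lifted_d (s_lifted p sp)).2.
rewrite xs_s -dy in ly.
have [_ y_min] := min_liftP (ex_intro _ y erefl : dimg (d j y)).
set M := emax_seq s _ _ in ly *.
have y_le : (l (j + 1) y <= M)%E.
  apply: (filtration_comb_le (l_filt _)) => // p sp _ p0.
  exact: (emax_seq_ub (P := fun p => p.2 != 0) (fun p => l (j + 1) p.1) sp p0).
have M_le y' : d j y' = d j y -> (M <= l (j + 1) y')%E by rewrite -ly; exact: y_min.
split=> [|y' /M_le]; last exact: le_trans.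
by apply/eqP; rewrite eq_le y_le M_le.
Qed.

Definition lifted_at k (y : A k) :=
  exists j (e : j + 1 = k) (y' : A (j + 1)), lifted y' /\ y = eq_rect (j + 1) A y' k e.

Lemma lifted_atE j (y : A (j + 1)) : lifted_at y <-> lifted y.
Proof.
split=> [[j' [e [y' [ly' ->]]]]|ly]; last by exists j, erefl, y.
have jj' : j' = j by apply: (addIr 1).
by subst j'; rewrite (eq_irrelevance e erefl).
Qed.

(* Basis vectors of [A k] are indexed by lifts living in [A (k + 1)] (the
   boundary part) and in [A k] (the lifted part); no transport is needed. *)
Definition lift_index k := {y : A k | lifted_at y}.

Definition adapted_basis k (ij : lift_index (k + 1) + lift_index k) : A k :=
  match ij with inl i => d k (sval i) | inr i => sval i end.

Lemma lift_index_inj k (i i' : lift_index k) : sval i = sval i' -> i = i'.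
Proof. by case: i i' => [y ly] [y' ly'] /= yy'; exact: eq_exist. Qed.

Lemma lift_index_lifted j (i : lift_index (j + 1)) : lifted (sval i).
Proof. exact/lifted_atE/svalP. Qed.

Lemma boundary_neq_lifted j (i : lift_index (j + 1 + 1)) (i' : lift_index (j + 1)) :
  d (j + 1) (sval i) != sval i'.
Proof.
apply/eqP => ii'; have := lifted_d_neq0 (lift_index_lifted i').
by rewrite -ii' dd eqxx.
Qed.

Lemma adapted_basis_inj j (ij ij' : lift_index (j + 1 + 1) + lift_index (j + 1)) :
  adapted_basis ij = adapted_basis ij' -> ij = ij'.
Proof.
case: ij ij' => i [i'|i'] /= ii'.
- by congr inl; apply/lift_index_inj/(lifted_inj _ _ ii'); exact: lift_index_lifted.
- by move/eqP: ii'; rewrite (negbTE (boundary_neq_lifted _ _)).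
- by move/eqP: ii'; rewrite eq_sym (negbTE (boundary_neq_lifted _ _)).
- by congr inr; exact: lift_index_inj.
Qed.

Lemma adapted_basis_neq0 j (ij : lift_index (j + 1 + 1) + lift_index (j + 1)) :
  adapted_basis ij != 0.
Proof.
case: ij => i /=; first exact: (dbasis_dimg (lifted_d (lift_index_lifted i)).1).2.
by apply: contraNneq (lifted_d_neq0 (lift_index_lifted i)) => ->; rewrite linear0.
Qed.

(* The boundary part [z] is a cycle and the lifted part [y] is a minimal lift,
   so [l (y + z)] is the larger of the two lengths. *)
Lemma adapted_basis_orthogonal j (s : seq ((lift_index (j + 1 + 1) + lift_index (j + 1)) * K)) :
  List.NoDup (map fst s) ->
  l (j + 1) (\sum_(p <- s) p.2 *: adapted_basis p.1) =
  emax_seq s (fun p => p.2 != 0) (fun p => l (j + 1) (adapted_basis p.1)).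
Proof.
move=> nd.
pose is_inl (p : (lift_index (j + 1 + 1) + lift_index (j + 1)) * K) :=
  if p.1 is inl _ then true else false.
rewrite (bigID is_inl) /= !sum_terms (emax_seqID _ _ is_inl) -!emax_seq_terms.
have nd_terms P := NoDup_terms (@adapted_basis_inj j) (NoDup_map_filter P nd).
have in_terms P q : List.In q (terms (@adapted_basis (j + 1)) (filter P s)) ->
    exists2 ij, P (ij, q.2) & q.1 = adapted_basis ij.
  by move=> /List.in_map_iff [[ij c] [<- /List.filter_In [_ Pp]]]; exists ij.
set z := \sum_(q <- terms _ (filter is_inl s)) _.
set y := \sum_(q <- terms _ (filter _ s)) _.
have z_dbasis q : List.In q (terms (@adapted_basis (j + 1)) (filter is_inl s)) -> dbasis q.1.
  by move=> /in_terms [[i|//] _ ->]; exact: (lifted_d (lift_index_lifted i)).1.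
have y_lifted q : List.In q (terms (@adapted_basis (j + 1)) (filter (predC is_inl) s)) ->
    lifted q.1.
  by move=> /in_terms [[//|i] _ ->]; exact: lift_index_lifted.
have [u du] : dimg z.
  by apply: (subspace_comb (dimg_subspace _)) => q /z_dbasis /dbasis_dimg [].
have [ly y_min] := lifted_comb_minimal (nd_terms _) y_lifted.
rewrite -/y in ly y_min; rewrite addrC (filtrationD_ge_max (l_filt (j + 1)) I I); last first.
  by apply: y_min; rewrite linearD -du dd addr0.
rewrite maxC ly (bifree_orthogonal (filtration_dimg _) (filtration_lift_norm _) (dbasisP _).1) //.
Qed.

Lemma adapted_basis_spanning j (v : A (j + 1)) :
  exists s, v = \sum_(p <- s) p.2 *: adapted_basis p.1.
Proof.
apply: (lspan_family (F := fun x => exists ij, adapted_basis ij = x)) => //.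
have [xs [xs_dbasis dvE]] := (dbasisP j).2 _ (ex_intro _ v erefl : dimg (d j v)).
have xs_dimg p (xp : List.In p xs) := (dbasis_dimg (xs_dbasis p xp)).1.
pose y := \sum_(p <- xs) p.2 *: min_lift p.1.
have dy : d j y = d j v.
  rewrite /y dvE linear_sum; apply: eq_big_In => p xp.
  by rewrite linearZ (min_liftP (xs_dimg p xp)).1.
have [u du] : exists u, d (j + 1) u = v - y by apply: A_exact; rewrite linearB dy subrr.
rewrite -(subrK y v); apply: lspanD.
  apply: lspanS ((dbasisP (j + 1)).2 _ (ex_intro _ u du)) => x bx.
  have lx : lifted_at (min_lift x) by apply/lifted_atE; exists x.
  by exists (inl (exist _ _ lx)); rewrite /= (min_liftP (dbasis_dimg bx).1).1.
exists (map (fun p => (min_lift p.1, p.2)) xs); split; last by rewrite big_map.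
move=> _ /List.in_map_iff [[x c] [<- xp]] /=.
have lx : lifted_at (min_lift x) by apply/lifted_atE; exists x => //; exact: xs_dbasis xp.
by exists (inr (exist _ _ lx)).
Qed.

Lemma adapted_basis_is_orthogonal_basis j :
  is_basis (@adapted_basis (j + 1)) /\ l_orthogonal (l (j + 1)) (@adapted_basis (j + 1)).
Proof.
have orth : l_orthogonal (l (j + 1)) (@adapted_basis (j + 1)).
  split; first exact: adapted_basis_inj.
  by split; [exact: adapted_basis_neq0 | exact: adapted_basis_orthogonal].
split=> //; apply: l_orthogonal_is_basis (A_cc.2.1 _) orth _.
exact: adapted_basis_spanning.
Qed.

End ChainComplex.

Unset Implicit Arguments.
Theorem proposition3p13 (R : realType) (K : fieldType)
    (A : int -> lmodType K)
    (d : forall k : int, {linear A (k + 1) -> A k})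
    (l : forall k : int, A k -> \bar R) :
  ascending_chain_complex d l ->
  acyclic d ->
  (forall k, best_approximation (l k)) ->
  exists (I : int -> Type)
         (x : forall k : int, I (k + 1) -> A k)
         (y : forall k : int, I k -> A k),
    (forall k : int,
       is_basis (fun ij : I (k + 1) + I k =>
                   match ij with inl i => x k i | inr j => y k j end) /\
       l_orthogonal (l k) (fun ij : I (k + 1) + I k =>
                   match ij with inl i => x k i | inr j => y k j end)) /\
    (forall (k : int) (i : I (k + 1)), d k (y (k + 1) i) = x k i).
Proof.
move=> A_cc A_exact A_best.
exists (lift_index A_cc A_best), (fun k i => d k (sval i)), (fun k i => sval i).
split=> // k; rewrite -(subrK 1 k).
exact: adapted_basis_is_orthogonal_basis.
Qed.
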